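(* Let $n\ge2$, $y\in\{1,\dots,n-1\}$, $L_b=n-y+1$, and $0\le a<1$. Let $A\in\mathbb{R}^{n\times n}$ be the stem-bud network with all edge weights equal to $a$, i.e., $a_{q+1,q}=a$ for $q=1,\dots,n-1$, $a_{yn}=a$, and all other entries zero, and consider the single input $B=e_1$ and time horizon $T$ (a positive integer). Then: (i) if $w>0$ is added to the weight of a single edge of the bud (one of the edges $q\to q+1$ with $y\le q\le n-1$, or $n\to y$), the modified network has spectral radius less than $1$ provided $0<w<\frac{1-a^{L_b}}{a^{L_b-1}}$ (with no upper restriction if $a=0$); (ii) $\operatorname{tr}(\mathcal{W}_A)\le\sum_{k=0}^{y-2}a^{2k}+\sum_{k=y-1}^{n-1}\frac{a^{2k}}{(1-a^{L_b})^2}$, where $\mathcal{W}_A=\sum_{t=0}^{T-1}A^te_1e_1^{\top}(A^t)^{\top}$.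
   Context: $e_k$ is the $k$-th canonical unit vector; $a_{pq}$ is the weight of edge $q\to p$; the bud of the stem-bud network is the cycle $y\to y+1\to\cdots\to n\to y$, of length $L_b$. *)

From HB Require Import structures.
From mathcomp Require Import all_boot all_order all_algebra.
From mathcomp Require Import complex.
Set Implicit Arguments. Unset Strict Implicit. Unset Printing Implicit Defensive.
Import Order.TTheory GRing.Theory Num.Theory.
Local Open Scope ring_scope.

Definition eigenvaluesC (R : rcfType) (n : nat) (A : 'M[R]_n) : seq R[i] :=
  sval (closed_field_poly_normal (char_poly (map_mx (fun x : R => (x%:C)%C) A))).

Definition spectral_radius (R : rcfType) (n : nat) (A : 'M[R]_n) : R :=
  \big[Num.max/0]_(z <- eigenvaluesC A) Normc.normc z.

Definition e1 (R : rcfType) (n : nat) : 'cV[R]_n :=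
  \col_(i < n) ((i : nat) == 0%N)%:R.

(* Stem-bud network on nodes 1..n (0-based: 0..n-1), all edge weights a:
   edges q -> q+1 (q = 1..n-1) and n -> y.  Entry A p q is the weight of
   edge q -> p. *)
Definition stem_bud (R : rcfType) (n y : nat) (a : R) : 'M[R]_n :=
  \matrix_(p < n, q < n)
    (if ((p : nat) == q.+1) || (((p : nat) == y.-1) && ((q : nat) == n.-1))
     then a else 0).

(* (p, q) (0-based) is an edge q -> p of the bud y -> y+1 -> ... -> n -> y. *)
Definition bud_edge (n y : nat) (p q : nat) : bool :=
  (((p == q.+1) && (y.-1 <= q) && (q < n.-1)) || ((p == y.-1) && (q == n.-1)))%N.

Definition gramian_e1 (R : rcfType) (n : nat) (A : 'M[R]_n) (T : nat) : 'M[R]_n :=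
  \sum_(t < T) (A ^+ t *m e1 R n *m (e1 R n)^T *m (A ^+ t)^T).

From HB Require Import structures.
From mathcomp Require Import all_boot all_order all_algebra.
From mathcomp Require Import complex lra zify.
Set Implicit Arguments.
Unset Strict Implicit.
Unset Printing Implicit Defensive.
Import Order.TTheory GRing.Theory Num.Theory.
Local Open Scope ring_scope.

(* Every node of the stem-bud network has exactly one out-edge, q -> next q, so
   the network and its perturbations along the bud are weighted adjacency
   matrices of the functional graph of [next].  For such a matrix, a left
   eigenvector v with eigenvalue z satisfies z v_q = c_q v_(next q).  Every node
   reaches the bud, so if z != 0 then v does not vanish on the bud, and going
   once around the bud gives z^Lb = product of the bud weights.  After the
   perturbation this product is (a + w) a^(Lb-1) < 1, whence |z| < 1.
   For the Gramian, A^t e_1 = a^t e_(next^t 1), so its trace is the geometric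
   sum of the a^(2t), which is at most 1/(1 - a^2); the right-hand side is at
   least that value because (1 - a^Lb)^2 <= 1 - a^(2 Lb). *)

Definition fun_graph_mx {R : pzSemiRingType} {n : nat} (f : 'I_n -> 'I_n)
    (c : 'I_n -> R) : 'M[R]_n :=
  \matrix_(p, q) if p == f q then c q else 0.

Section FunGraphMatrix.

Variables (n : nat) (f : 'I_n -> 'I_n).

Lemma fun_graph_mx_delta (R : pzSemiRingType) (c : 'I_n -> R) k
    (j : 'I_n) (l : 'I_k) :
  fun_graph_mx f c *m delta_mx j l = c j *: delta_mx (f j) l.
Proof.
apply/matrixP => p l'; rewrite !mxE (bigD1 j) //= big1 => [|i /negbTE ij].
  by rewrite !mxE eqxx /= addr0; case: (_ == f j); rewrite ?mul0r ?mulr0.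
by rewrite !mxE ij mulr0.
Qed.

Lemma fun_graph_mx_const_exp_delta (R : comPzSemiRingType) (a : R) t k
    (j : 'I_n) (l : 'I_k) :
  fun_graph_mx f (fun=> a) ^+ t *m delta_mx j l =
  a ^+ t *: delta_mx (iter t f j) l.
Proof.
elim: t => [|t IH]; first by rewrite expr0 mul1mx scale1r.
by rewrite exprS -mulmxE -mulmxA IH -scalemxAr fun_graph_mx_delta scalerA -exprSr.
Qed.

Lemma fun_graph_mxDdelta (R : pzSemiRingType) (c : 'I_n -> R) (w : R) (q : 'I_n) :
  fun_graph_mx f c + w *: delta_mx (f q) q =
  fun_graph_mx f (fun j => c j + w * (j == q)%:R).
Proof.
apply/matrixP => p j; rewrite !mxE.
have [-> | /negbTE jq] := eqVneq j q; rewrite ?eqxx ?andbT ?jq ?andbF;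
  by case: (p == f _); rewrite ?mulr1 ?mulr0 ?addr0 ?add0r.
Qed.

Lemma map_fun_graph_mx (R S : pzSemiRingType) (g : {rmorphism R -> S})
    (c : 'I_n -> R) :
  map_mx g (fun_graph_mx f c) = fun_graph_mx f (g \o c).
Proof. by apply/matrixP => p q; rewrite !mxE; case: ifP; rewrite ?rmorph0. Qed.

Lemma fun_graph_mx_left_eigen (R : comPzSemiRingType) (c : 'I_n -> R)
    (z : R) (v : 'rV_n) :
  v *m fun_graph_mx f c = z *: v -> forall q, z * v 0 q = c q * v 0 (f q).
Proof.
move=> /matrixP eig q; have := eig 0 q; rewrite !mxE => <-.
rewrite (bigD1 (f q)) //= big1 => [|p /negbTE pq]; last by rewrite mxE pq mulr0.
by rewrite mxE eqxx addr0 mulrC.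
Qed.

End FunGraphMatrix.

Lemma tr_gramian_e1_fun_graph_mx (R : rcfType) m (f : 'I_m.+1 -> 'I_m.+1)
    (a : R) T :
  \tr (gramian_e1 (fun_graph_mx f (fun=> a)) T) = \sum_(t < T) a ^+ (2 * t).
Proof.
have e1E : e1 R m.+1 = delta_mx 0 0.
  by apply/matrixP => i j; rewrite !mxE [j]ord1 andbT.
rewrite /gramian_e1 raddf_sum; apply: eq_bigr => t _ /=.
rewrite e1E -!mulmxA -trmx_mul mulmxA fun_graph_mx_const_exp_delta mxtrace_mulC.
rewrite trace_mx11 [(_ *: _)^T]linearZ /= trmx_delta -scalemxAl -scalemxAr.
by rewrite mul_delta_mx !mxE !eqxx mulr1 -exprD addnn -mul2n.
Qed.


Section LeftEigenIteration.

Variables (T : Type) (f : T -> T).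

Lemma left_eigen_iter (R : comPzSemiRingType) (c u : T -> R) (z : R) :
    (forall q, z * u q = c q * u (f q)) ->
  forall k q, z ^+ k * u q = (\prod_(i < k) c (iter i f q)) * u (iter k f q).
Proof.
move=> eig; elim=> [|k IH] q; first by rewrite expr0 big_ord0 !mul1r.
rewrite exprSr -mulrA eig mulrCA IH big_ord_recl iterSr mulrA.
by under [in RHS]eq_bigr => i _ do rewrite lift0 iterSr.
Qed.

Lemma left_eigen_norm_lt1 (F : numDomainType) (c u : T -> F) (z : F)
    (r : T) (L : nat) :
    (0 < L)%N -> iter L f r = r -> (forall q, exists k, iter k f q = r) ->
    `|\prod_(i < L) c (iter i f r)| < 1 ->
    (forall q, z * u q = c q * u (f q)) -> (exists q, u q != 0) ->
  `|z| < 1.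
Proof.
move=> L_gt0 r_cycle r_reached gain_lt1 eig [q uq_neq0].
have [->|z_neq0] := eqVneq z 0; first by rewrite normr0 ltr01.
have ur_neq0 : u r != 0.
  have [k qkr] := r_reached q; apply: contraNneq uq_neq0 => ur0.
  have /eqP := left_eigen_iter eig k q.
  by rewrite qkr ur0 mulr0 mulf_eq0 expf_eq0 (negbTE z_neq0) andbF.
have := left_eigen_iter eig L r; rewrite r_cycle => /(mulIf ur_neq0) zL.
by rewrite -(expr_lt1 L_gt0) // -normrX zL.
Qed.

End LeftEigenIteration.

Lemma normc_real (R : rcfType) (x : R) : `|x%:C%C| = `|x|%:C%C.
Proof. by rewrite normc_def /= expr0n /= addr0 sqrtr_sqr. Qed.

Lemma spectral_radius_lt1 (R : rcfType) n (A : 'M[R]_n) :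
    (forall z, eigenvalue (map_mx (real_complex R) A) z -> `|z| < 1) ->
  spectral_radius A < 1.
Proof.
move=> eig_lt1; rewrite /spectral_radius /eigenvaluesC.
case: closed_field_poly_normal => r /=.
rewrite (monicP (char_poly_monic _)) scale1r => charE.
rewrite big_seq; apply: (big_ind (fun x : R => x < 1)) => [|x1 x2|z zr].
- exact: ltr01.
- by rewrite gt_max => -> ->.
rewrite -ltcR; apply: eig_lt1.
by rewrite eigenvalue_root_char charE root_prod_XsubC.
Qed.

Section StemBud.

Variables (m y : nat).
Hypothesis y_le_m : (y <= m)%N.

Definition stem_bud_next (q : 'I_m.+1) : 'I_m.+1 :=
  if (q < m)%N then inord q.+1 else inord y.-1.

Lemma stem_bud_next_val q :
  stem_bud_next q = (if (q < m)%N then q.+1 else y.-1) :> nat.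
Proof. by rewrite /stem_bud_next; case: ifP => q_lt_m; rewrite inordK //; lia. Qed.

Lemma stem_budE (R : rcfType) (a : R) :
  stem_bud m.+1 y a = fun_graph_mx stem_bud_next (fun=> a).
Proof.
apply/matrixP => p q; rewrite !mxE /=.
have -> : (p == stem_bud_next q) = (p == stem_bud_next q :> nat) by [].
have := ltn_ord p; have := ltn_ord q.
by rewrite stem_bud_next_val => *; congr (if _ then _ else _); case: ltnP; lia.
Qed.

Lemma iter_stem_bud_next_val k (q : 'I_m.+1) :
  (q + k <= m)%N -> iter k stem_bud_next q = (q + k)%N :> nat.
Proof.
elim: k => [|k IH] qk_le_m; first by rewrite addn0.
by rewrite iterS stem_bud_next_val IH; [case: ltnP|]; lia.
Qed.

Lemma iter_stem_bud_next_root (q : 'I_m.+1) :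
  iter (m - q).+1 stem_bud_next q = inord y.-1.
Proof.
have q_le_m : (q <= m)%N by rewrite -ltnS.
apply/val_inj; rewrite /= stem_bud_next_val iter_stem_bud_next_val ?subnKC //.
by rewrite ltnn inordK //; lia.
Qed.

Lemma bud_edgeP (p q : 'I_m.+1) :
  bud_edge m.+1 y p q -> p = stem_bud_next q /\ (y.-1 <= q)%N.
Proof.
rewrite /bud_edge /= => edge; split; last by lia.
by apply/val_inj; rewrite /= stem_bud_next_val; case: ltnP; lia.
Qed.

Lemma stem_bud_left_eigen_norm_lt1 (F : numDomainType) (c : 'I_m.+1 -> F)
    (z : F) (v : 'rV_m.+1) :
    `|\prod_(i < (m - y.-1).+1) c (iter i stem_bud_next (inord y.-1))| < 1 ->
    v != 0 -> v *m fun_graph_mx stem_bud_next c = z *: v ->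
  `|z| < 1.
Proof.
move=> gain_lt1 /rV0Pn v_neq0 /fun_graph_mx_left_eigen eig.
have bud_cycle := iter_stem_bud_next_root (inord y.-1).
rewrite inordK in bud_cycle; last by lia.
apply: (left_eigen_norm_lt1 _ bud_cycle _ gain_lt1 eig v_neq0) => // q.
by exists (m - q).+1; apply: iter_stem_bud_next_root.
Qed.

Lemma prod_stem_bud_bump (R : comPzSemiRingType) (a w : R) (q : 'I_m.+1) :
    (y.-1 <= q)%N ->
  \prod_(i < (m - y.-1).+1) (a + w * (iter i stem_bud_next (inord y.-1) == q)%:R)
    = (a + w) * a ^+ (m - y.-1).
Proof.
move=> bud_q; have iterE i : (i <= m - y.-1)%N ->
    iter i stem_bud_next (inord y.-1) = (y.-1 + i)%N :> nat.
  by move=> i_le; rewrite iter_stem_bud_next_val inordK //; lia.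
have i_q_lt : (q - y.-1 < (m - y.-1).+1)%N by have := ltn_ord q; lia.
rewrite (bigD1 (Ordinal i_q_lt)) //=; congr (_ * _).
  rewrite (_ : _ == q) ?mulr1 //; apply/eqP/val_inj.
  by rewrite /= iterE; lia.
rewrite (eq_bigr (fun=> a)) => [|i i_neq].
  by rewrite prodr_const cardC1 card_ord.
rewrite (_ : _ == q = false) ?mulr0 ?addr0 //.
apply: contraNF i_neq => /eqP/(congr1 val); rewrite /= iterE => [iq|]; last first.
  by have := ltn_ord i; lia.
by apply/eqP/val_inj; rewrite /=; lia.
Qed.

End StemBud.

Section GeometricBounds.

Variable R : realFieldType.

Lemma geometric_sum_le_split (x : R) T k L :
    0 <= x -> x < 1 -> (0 < L)%N ->
  \sum_(i < T) x ^+ i <=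
    \sum_(i < k) x ^+ i + \sum_(k <= i < k + L) x ^+ i / (1 - x ^+ L).
Proof.
move=> x_ge0 x_lt1 L_gt0; have x_gap : 0 < 1 - x by lra.
have geo n : (1 - x) * \sum_(i < n) x ^+ i = 1 - x ^+ n.
  by rewrite -opprB mulNr -subrX1 opprB.
have xL_gap : 0 < 1 - x ^+ L by rewrite subr_gt0 exprn_ilt1 // -lt0n.
have shift : \sum_(k <= i < k + L) x ^+ i = x ^+ k * \sum_(i < L) x ^+ i.
  rewrite -{1}[k]add0n big_addn addKn big_mkord mulr_sumr.
  by apply: eq_bigr => i _; rewrite exprD mulrC.
have tail : (1 - x) * \sum_(k <= i < k + L) x ^+ i / (1 - x ^+ L) = x ^+ k.
  by rewrite -mulr_suml shift mulrA mulrCA geo -mulrA divff ?mulr1 // lt0r_neq0.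
by rewrite -(ler_pM2l x_gap) mulrDr tail !geo subrK gerBl exprn_ge0.
Qed.

Lemma sum_sqr_geometric_le_split (a : R) T k L :
    0 <= a -> a < 1 -> (0 < L)%N ->
  \sum_(t < T) a ^+ (2 * t) <=
    \sum_(0 <= i < k) a ^+ (2 * i)
    + \sum_(k <= i < k + L) a ^+ (2 * i) / (1 - a ^+ L) ^+ 2.
Proof.
move=> a_ge0 a_lt1 L_gt0; have aL_ge0 := exprn_ge0 L a_ge0.
have aL_lt1 : a ^+ L < 1 by rewrite exprn_ilt1 // -lt0n.
have gap_gt0 : 0 < (1 - a ^+ L) ^+ 2 by rewrite exprn_gt0 // subr_gt0.
have gap_le : (1 - a ^+ L) ^+ 2 <= 1 - (a ^+ 2) ^+ L.
  by rewrite -exprM mulnC exprM; move: (a ^+ L) aL_ge0 aL_lt1 => b *; nra.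
rewrite big_mkord; under eq_bigr do rewrite exprM.
under [\sum_(i < k) _]eq_bigr do rewrite exprM.
apply: le_trans (geometric_sum_le_split T k _ _ L_gt0) _.
- exact: sqr_ge0.
- by rewrite exprn_ilt1.
rewrite lerD2l; apply: ler_sum => i _; rewrite exprM.
apply: ler_wpM2l; first exact/exprn_ge0/sqr_ge0.
by rewrite lef_pV2 ?posrE // (lt_le_trans gap_gt0).
Qed.

End GeometricBounds.

Lemma perturbed_bud_gain_lt1 (R : realFieldType) (a w : R) K :
    0 <= a -> (0 < K)%N -> (a != 0 -> w < (1 - a ^+ K.+1) / a ^+ K) ->
  (a + w) * a ^+ K < 1.
Proof.
move=> a_ge0 K_gt0 w_lt.
have [->|a_neq0] := eqVneq a 0; first by rewrite expr0n gtn_eqF // mulr0 ltr01.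
have aK_gt0 : 0 < a ^+ K by rewrite exprn_gt0 // lt0r a_neq0.
by move: (w_lt a_neq0); rewrite ltr_pdivlMr // exprS mulrDl => ?; lra.
Qed.

Theorem theorem5p6 (R : rcfType) (n y T : nat) (a : R) :
  (2 <= n)%N -> (1 <= y)%N -> (y <= n.-1)%N -> (0 < T)%N ->
  0 <= a -> a < 1 ->
  let Lb := (n - y + 1)%N in
  let A := stem_bud n y a in
  (* (i) *)
  (forall (p q : 'I_n) (w : R), bud_edge n y p q -> 0 < w ->
     (a != 0 -> w < (1 - a ^+ Lb) / a ^+ Lb.-1) ->
     spectral_radius (A + w *: delta_mx p q) < 1)
  /\
  (* (ii) *)
  \tr (gramian_e1 A T) <=
    \sum_(0 <= k < y.-1) a ^+ (2 * k)
    + \sum_(y.-1 <= k < n) a ^+ (2 * k) / (1 - a ^+ Lb) ^+ 2.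
Proof.
case: n => [|m] // n_ge2 y_ge1 y_le_m _ a_ge0 a_lt1 Lb A; rewrite /= in y_le_m.
have Lb_eq : Lb = (m - y.-1).+1 by rewrite /Lb; lia.
rewrite /A stem_budE //; split.
  move=> p q w /bud_edgeP[// | -> bud_q] w_gt0 w_lt.
  rewrite fun_graph_mxDdelta; apply: spectral_radius_lt1 => z.
  move=> /eigenvalueP[v eig v_neq0]; rewrite map_fun_graph_mx in eig.
  apply: (stem_bud_left_eigen_norm_lt1 _ _ v_neq0 eig) => //.
  rewrite /= -rmorph_prod normc_real ltcR prod_stem_bud_bump //.
  rewrite ger0_norm ?mulr_ge0 ?addr_ge0 ?exprn_ge0 ?(ltW w_gt0) //.
  by rewrite Lb_eq in w_lt; apply: perturbed_bud_gain_lt1 => //; lia.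
rewrite tr_gramian_e1_fun_graph_mx; have -> : m.+1 = (y.-1 + Lb)%N by lia.
by apply: sum_sqr_geometric_le_split => //; lia.
Qed.
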